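(* Let $\mathcal L:\mathbb F^{q\times q}\to\mathbb F^{n\times n}$ be linear, $m=\operatorname{rank}\mathbb L$, and let $L_1,\ldots,L_m$, $A_1,\ldots,A_m$, $B_1,\ldots,B_m$ be as in the construction below. The following are equivalent: (i) $\mathcal L$ is $*$-linear; (ii) $L=\sum_{k=1}^m\overline{L_k}\otimes A_k$; (iii) $L_k=\sum_{l=1}^m\vec{\mathbf 1}_n^*(B_k\circ\overline{L_l})\vec{\mathbf 1}_q\,A_l$ for $k=1,\ldots,m$. If these hold, then $\vec{\mathbf 1}_n^*(B_k\circ\overline{L_l})\vec{\mathbf 1}_q=\vec{\mathbf 1}_n^*(\overline{B_l}\circ L_k)\vec{\mathbf 1}_q$ for all $k,l=1,\ldots,m$.
   Context: $\mathbb F\in\{\mathbb R,\mathbb C\}$; $\otimes$ Kronecker, $\circ$ Hadamard product, $\vec{\mathbf 1}_p$ all-ones vector, $\overline X$ entrywise conjugate. $*$-linear: $\mathcal L(V^* )=\mathcal L(V)^*$. Matricization $L\in\mathbb F^{n^2\times q^2}$ with $L\operatorname{vec}(V)=\operatorname{vec}(\mathcal L(V))$ (column-stacking), $L=[L_{ij}]$, $1\le i\le n$, $1\le j\le q$, $L_{ij}\in\mathbb F^{n\times q}$; Choi matrix $\mathbb L=[\mathcal L(\mathcal E^{(q)}_{ij})]_{i,j=1}^q$, $m=\operatorname{rank}\mathbb L=\dim\operatorname{span}\{L_{ij}\}$. Construction: $L_1,\ldots,L_m$ span $\operatorname{span}\{L_{ij}\}$; $L_{ij}=\sum_k\alpha^{ij}_kL_k$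 (unique), $L_k=\sum_{i,j}\beta^k_{ij}L_{ij}$ (any choice); $A_k$ has $(i,j)$ entry $\overline{\alpha^{ij}_k}$, $B_k$ has $(i,j)$ entry $\beta^k_{ij}$. (One always has $L=\sum_k\overline{A_k}\otimes L_k$.) *)

From HB Require Import structures.
From mathcomp Require Import all_boot all_order all_algebra.
From mathcomp Require Export mxtens.
Set Implicit Arguments. Unset Strict Implicit. Unset Printing Implicit Defensive.
Import Order.TTheory GRing.Theory Num.Theory.
Local Open Scope ring_scope.

Definition mconj (F : fieldType) (conj : F -> F) m n (A : 'M[F]_(m, n)) :
  'M[F]_(m, n) := map_mx conj A.

Definition adjmx (F : fieldType) (conj : F -> F) m n (A : 'M[F]_(m, n)) :
  'M[F]_(n, m) := (map_mx conj A)^T.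

Definition star_linear (F : fieldType) (conj : F -> F) q n
  (Lmap : 'M[F]_q -> 'M[F]_n) : Prop :=
  forall V : 'M[F]_q, Lmap (adjmx conj V) = adjmx conj (Lmap V).

(* Column-stacking vectorization: the entry A a b sits at index b*m + a. *)
Definition vecc (F : fieldType) m n (A : 'M[F]_(m, n)) : 'cV[F]_(n * m) :=
  \col_k A (mxtens_unindex k).2 (mxtens_unindex k).1.

(* The (i,j) block (size n x q) of a (n*n) x (q*q) matrix L = [L_ij]. *)
Definition Lblk (F : fieldType) n q (L : 'M[F]_(n * n, q * q))
  (i : 'I_n) (j : 'I_q) : 'M[F]_(n, q) :=
  \matrix_(r, a) L (mxtens_index (i, r)) (mxtens_index (j, a)).

Definition choi (F : fieldType) q n (Lmap : 'M[F]_q -> 'M[F]_n) :=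
  \mxblock_(i < q, j < q) Lmap (delta_mx i j).

Definition hadamard (F : fieldType) m n (A B : 'M[F]_(m, n)) : 'M[F]_(m, n) :=
  \matrix_(i, j) (A i j * B i j).

Definition ones (F : fieldType) n : 'cV[F]_n := const_mx 1.

Definition onesform (F : fieldType) (conj : F -> F) n q (X : 'M[F]_(n, q)) : F :=
  (adjmx conj (ones F n) *m X *m ones F q) 0 0.

From HB Require Import structures.
From mathcomp Require Import all_boot all_order all_algebra.
From mathcomp Require Import mxtens.
Set Implicit Arguments. Unset Strict Implicit. Unset Printing Implicit Defensive.
Import GRing.Theory.
Local Open Scope ring_scope.

(* Write l(i,r;j,a) for the entry L((i,r),(j,a)) of the matricization, i.e.
   the (r,a) entry of the block L_ij.  The argument is entrywise:
   - L(E_ab) has (r,i) entry l(i,r;b,a); hence *-linearity (i) is the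
     symmetry  l(i,r;j,a) = conj l(r,i;a,j)  of the matricization.
   - Expanding L_ij = sum_k alpha^ij_k L_k, the Kronecker sum in (ii) has
     entry sum_k conj(L_k(i,j)) conj(alpha^ra_k) = conj l(r,i;a,j), so
     (ii) is the same symmetry.
   - Since rank Choi = m, the L_k are linearly independent (the Choi matrix
     factors through an n q x m matrix built from the L_k); hence the
     coefficient matrices are biorthogonal: sum_ij beta^k_ij alpha^ij_l = d_kl.
   - With c_kl = 1^*(B_k o conj L_l)1 = sum_ij beta^k_ij conj L_l(i,j), the
     symmetry gives (iii) directly; conversely (iii) together with
     biorthogonality forces c_kl = conj c_lk, which in turn gives back the
     symmetry. *)

Lemma onesformE (F : fieldType) (conj : {rmorphism F -> F}) n q
    (X : 'M[F]_(n, q)) :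
  onesform conj X = \sum_i \sum_j X i j.
Proof.
rewrite /onesform !mxE exchange_big /=; apply: eq_bigr => j _.
rewrite !mxE mulr1; apply: eq_bigr => i _.
by rewrite /adjmx /ones !mxE rmorph1 mul1r.
Qed.

Lemma veccE (F : fieldType) m n (A : 'M[F]_(m, n)) i j :
  vecc A (mxtens_index (i, j)) 0 = A j i.
Proof. by rewrite /vecc mxE mxtens_indexK. Qed.

Lemma adjmx_delta (F : fieldType) (conj : {rmorphism F -> F}) q (a b : 'I_q) :
  adjmx conj (delta_mx a b) = delta_mx b a.
Proof. by apply/matrixP => x y; rewrite /adjmx !mxE rmorph_nat andbC. Qed.

Lemma exchange_big3 (R : nmodType) a b c (f : 'I_a -> 'I_b -> 'I_c -> R) :
  \sum_i \sum_j \sum_l f i j l = \sum_l \sum_i \sum_j f i j l.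
Proof. by under eq_bigr do rewrite exchange_big; exact: exchange_big. Qed.

Lemma sum_kronecker (R : pzSemiRingType) (I : finType) (k : I) (f : I -> R) :
  \sum_l (k == l)%:R * f l = f k.
Proof.
rewrite (bigD1 k) //= eqxx mul1r big1 ?addr0 // => l.
by rewrite eq_sym => /negbTE ->; rewrite mul0r.
Qed.

Lemma rank_factor_ker0 (F : fieldType) p m s (X : 'M[F]_(p, m))
    (Y : 'M[F]_(m, s)) :
  \rank (X *m Y) = m -> forall v : 'cV[F]_m, X *m v = 0 -> v = 0.
Proof.
move=> rXY v Xv0.
have rowfree_Xt : row_free X^T.
  rewrite /row_free mxrank_tr eqn_leq rank_leq_col /=.
  by rewrite -{1}rXY mxrankM_maxl.
apply: trmx_inj; apply: (row_free_inj rowfree_Xt).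
by rewrite /= -trmx_mul Xv0 !trmx0 mul0mx.
Qed.

Section Matricization.
Variables (F : fieldType) (conj : {rmorphism F -> F}) (n q : nat).
Variable Lmap : {linear 'M[F]_q -> 'M[F]_n}.
Variable L : 'M[F]_(n * n, q * q).
Hypothesis hL : forall V : 'M[F]_q, L *m vecc V = vecc (Lmap V).

Lemma Lmap_delta a b r i : Lmap (delta_mx a b) r i = Lblk L i b r a.
Proof.
have := congr1 (fun M : 'cV_(n * n) => M (mxtens_index (i, r)) 0)
  (hL (delta_mx a b)).
rewrite veccE mxE => <-; rewrite mxE.
rewrite (bigD1 (mxtens_index (b, a))) //= big1 => [|k nek].
  by rewrite veccE mxE !eqxx mulr1 addr0.
case: (mxtens_indexP k) nek => b' a' nek.
rewrite veccE mxE; case: eqP => [ea|]; last by rewrite mulr0.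
case: eqP => [eb|]; last by rewrite mulr0.
by rewrite -ea -eb eqxx in nek.
Qed.

Lemma Lmap_entry V r i :
  Lmap V r i = \sum_a \sum_b V a b * Lblk L i b r a.
Proof.
rewrite {1}(matrix_sum_delta V) linear_sum summxE; apply: eq_bigr => a _.
rewrite linear_sum summxE; apply: eq_bigr => b _.
by rewrite linearZ mxE Lmap_delta.
Qed.

Definition blk_symmetric :=
  forall i r j a, Lblk L i j r a = conj (Lblk L r a i j).

Lemma star_linear_blk_symmetric : star_linear conj Lmap <-> blk_symmetric.
Proof.
split=> [starL i r j a | symL V].
  rewrite -(Lmap_delta a j) -(adjmx_delta conj) starL /adjmx !mxE.
  by rewrite Lmap_delta mxE.
apply/matrixP => r i; rewrite Lmap_entry /adjmx !mxE Lmap_entry.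
rewrite rmorph_sum exchange_big; apply: eq_bigr => a _.
rewrite rmorph_sum; apply: eq_bigr => b _.
by rewrite (symL i r a b) !mxE rmorphM.
Qed.

End Matricization.

Section Decomposition.
Variables (F : fieldType) (conj : {rmorphism F -> F}) (n q m : nat).
Variable L : 'M[F]_(n * n, q * q).
Variables (Lk : 'I_m -> 'M[F]_(n, q)) (alpha : 'I_n -> 'I_q -> 'I_m -> F)
  (beta : 'I_m -> 'I_n -> 'I_q -> F).
Hypothesis halpha : forall i j, Lblk L i j = \sum_(k < m) alpha i j k *: Lk k.
Hypothesis hbeta : forall k,
  Lk k = \sum_(i < n) \sum_(j < q) beta k i j *: Lblk L i j.

Definition Amx k : 'M[F]_(n, q) := \matrix_(i, j) conj (alpha i j k).

Definition gram k l := \sum_i \sum_j beta k i j * conj (Lk l i j).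

Lemma Lblk_entry i j r a : Lblk L i j r a = \sum_k alpha i j k * Lk k r a.
Proof. by rewrite halpha summxE; apply: eq_bigr => k _; rewrite mxE. Qed.

Lemma Lk_entry k r a : Lk k r a = \sum_i \sum_j beta k i j * Lblk L i j r a.
Proof.
rewrite {1}(hbeta k) summxE; apply: eq_bigr => i _.
by rewrite summxE; apply: eq_bigr => j _; rewrite !mxE.
Qed.

Lemma conj_Lblk_entry i r j a :
  conj (Lblk L r a i j) = \sum_k conj (Lk k i j) * conj (alpha r a k).
Proof.
by rewrite Lblk_entry rmorph_sum; apply: eq_bigr => k _; rewrite rmorphM mulrC.
Qed.

Lemma onesform_gram k l :
  onesform conj (hadamard (\matrix_(i, j) beta k i j) (mconj conj (Lk l)))
  = gram k l.
Proof.
by rewrite onesformE; apply: eq_bigr => i _; apply: eq_bigr => j _; rewrite !mxE.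
Qed.

Lemma onesform_conj_gram : involutive conj -> forall k l,
  onesform conj (hadamard (mconj conj (\matrix_(i, j) beta l i j)) (Lk k))
  = conj (gram l k).
Proof.
move=> conjK k l; rewrite onesformE rmorph_sum; apply: eq_bigr => i _.
by rewrite rmorph_sum; apply: eq_bigr => j _; rewrite !mxE rmorphM conjK.
Qed.

Lemma kron_expansion_blk_symmetric :
  L = \sum_(k < m) tensmx (mconj conj (Lk k)) (Amx k)
  <-> blk_symmetric conj L.
Proof.
have kronE i r j a : (\sum_(k < m) tensmx (mconj conj (Lk k)) (Amx k))
    (mxtens_index (i, r)) (mxtens_index (j, a)) = conj (Lblk L r a i j).
  rewrite conj_Lblk_entry summxE; apply: eq_bigr => k _.
  by rewrite tensmxE /Amx !mxE.
split=> [eqL i r j a | symL].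
  by rewrite -kronE -eqL mxE.
apply/matrixP => x y.
case: (mxtens_indexP x) => i r; case: (mxtens_indexP y) => j a.
by rewrite kronE -symL mxE.
Qed.

Lemma blk_symmetric_expansion :
  blk_symmetric conj L -> forall k, Lk k = \sum_(l < m) gram k l *: Amx l.
Proof.
move=> symL k; apply/matrixP => r a; rewrite Lk_entry summxE.
transitivity (\sum_i \sum_j \sum_l
    beta k i j * conj (Lk l i j) * conj (alpha r a l)).
  apply: eq_bigr => i _; apply: eq_bigr => j _.
  by rewrite symL conj_Lblk_entry mulr_sumr; apply: eq_bigr => l _; rewrite mulrA.
rewrite exchange_big3; apply: eq_bigr => l _; rewrite /Amx !mxE mulr_suml.
by apply: eq_bigr => i _; rewrite mulr_suml.
Qed.

Lemma expansion_entry :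
  (forall k, Lk k = \sum_(l < m) gram k l *: Amx l) ->
  forall l i j, Lk l i j = \sum_l' gram l l' * conj (alpha i j l').
Proof.
move=> expand l i j; rewrite {1}(expand l) summxE.
by apply: eq_bigr => l' _; rewrite /Amx !mxE.
Qed.

Section Basis.
Variable Lmap : {linear 'M[F]_q -> 'M[F]_n}.
Hypothesis hL : forall V : 'M[F]_q, L *m vecc V = vecc (Lmap V).
Hypothesis hm : m = \rank (choi Lmap).

(* The Choi matrix factors through the n q x m matrix of entries of the L_k,
   so rank Choi = m makes the L_k linearly independent. *)
Lemma Lk_free (d : 'I_m -> F) : \sum_l d l *: Lk l = 0 -> forall l, d l = 0.
Proof.
pose X := \mxcol_(a < q) (\matrix_(r < n, l < m) Lk l r a).
pose Y := \mxrow_(b < q) (\matrix_(l < m, i < n) alpha i b l).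
have choiXY : choi Lmap = X *m Y.
  rewrite mul_mxcol_mxrow /choi; apply: eq_mxblock => a b.
  apply/matrixP => r i; rewrite (Lmap_delta hL) Lblk_entry !mxE.
  by apply: eq_bigr => l _; rewrite !mxE mulrC.
move=> dLk0 l.
have Xd0 : X *m \col_l d l = 0.
  rewrite mxcol_mul -(mxcol0 1); apply: eq_mxcol => a.
  apply/matrixP => r z.
  transitivity ((\sum_l d l *: Lk l) r a); last by rewrite dLk0 !mxE.
  rewrite !mxE summxE; apply: eq_bigr => l' _.
  by rewrite !mxE mulrC.
have d0 := rank_factor_ker0 (esym (etrans hm (congr1 _ choiXY))) Xd0.
by have := congr1 (fun v : 'cV[F]_m => v l 0) d0; rewrite !mxE.
Qed.

Lemma beta_alpha_biorth k l :
  \sum_i \sum_j beta k i j * alpha i j l = (k == l)%:R.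
Proof.
apply/eqP; rewrite -subr_eq0; apply/eqP; move: l.
apply: (@Lk_free (fun l => \sum_i \sum_j beta k i j * alpha i j l - (k == l)%:R)).
apply/matrixP => r a; rewrite summxE mxE.
under eq_bigr do rewrite mxE mulrBl.
rewrite sumrB sum_kronecker.
apply/eqP; rewrite subr_eq0; apply/eqP; rewrite [RHS]Lk_entry.
transitivity (\sum_i \sum_j \sum_l beta k i j * alpha i j l * Lk l r a).
  rewrite exchange_big3; apply: eq_bigr => l _; rewrite mulr_suml.
  by apply: eq_bigr => i _; rewrite mulr_suml.
apply: eq_bigr => i _; apply: eq_bigr => j _.
by rewrite Lblk_entry mulr_sumr; apply: eq_bigr => l _; rewrite mulrA.
Qed.

Lemma expansion_gram_hermitian : involutive conj ->
  (forall k, Lk k = \sum_(l < m) gram k l *: Amx l) ->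
  forall k l, gram k l = conj (gram l k).
Proof.
move=> conjK expand k l; rewrite {1}/gram.
transitivity (\sum_i \sum_j \sum_l'
    beta k i j * alpha i j l' * conj (gram l l')).
  apply: eq_bigr => i _; apply: eq_bigr => j _.
  rewrite (expansion_entry expand) rmorph_sum mulr_sumr.
  apply: eq_bigr => l' _.
  by rewrite rmorphM conjK mulrA -!mulrA [conj _ * _]mulrC.
rewrite exchange_big3.
transitivity (\sum_l' (k == l')%:R * conj (gram l l')).
  apply: eq_bigr => l' _; rewrite -beta_alpha_biorth mulr_suml.
  by apply: eq_bigr => i _; rewrite mulr_suml.
exact: sum_kronecker.
Qed.

Lemma expansion_blk_symmetric : involutive conj ->
  (forall k, Lk k = \sum_(l < m) gram k l *: Amx l) -> blk_symmetric conj L.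
Proof.
move=> conjK expand i r j a; rewrite Lblk_entry conj_Lblk_entry.
transitivity (\sum_k \sum_l alpha i j k * gram k l * conj (alpha r a l)).
  apply: eq_bigr => k _; rewrite (expansion_entry expand) mulr_sumr.
  by apply: eq_bigr => l _; rewrite mulrA.
rewrite exchange_big; apply: eq_bigr => l _.
rewrite (expansion_entry expand) rmorph_sum mulr_suml; apply: eq_bigr => k _.
rewrite rmorphM conjK -(expansion_gram_hermitian conjK expand).
by rewrite [alpha i j k * _]mulrC.
Qed.

End Basis.
End Decomposition.

Theorem proposition5p3
  (F : fieldType) (conj : {rmorphism F -> F}) (conjK : involutive conj)
  (n q m : nat)
  (Lmap : {linear 'M[F]_q -> 'M[F]_n})
  (L : 'M[F]_(n * n, q * q))
  (hL : forall V : 'M[F]_q, L *m vecc V = vecc (Lmap V))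
  (hm : m = \rank (choi Lmap))
  (Lk : 'I_m -> 'M[F]_(n, q))
  (alpha : 'I_n -> 'I_q -> 'I_m -> F)
  (beta : 'I_m -> 'I_n -> 'I_q -> F)
  (halpha : forall (i : 'I_n) (j : 'I_q),
      Lblk L i j = \sum_(k < m) alpha i j k *: Lk k)
  (hbeta : forall k : 'I_m,
      Lk k = \sum_(i < n) \sum_(j < q) beta k i j *: Lblk L i j) :
  let A : 'I_m -> 'M[F]_(n, q) := fun k => \matrix_(i, j) conj (alpha i j k) in
  let B : 'I_m -> 'M[F]_(n, q) := fun k => \matrix_(i, j) beta k i j in
  ((star_linear conj Lmap <->
      L = \sum_(k < m) tensmx (mconj conj (Lk k)) (A k))
   /\ (L = \sum_(k < m) tensmx (mconj conj (Lk k)) (A k) <->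
      (forall k : 'I_m, Lk k =
         \sum_(l < m) onesform conj (hadamard (B k) (mconj conj (Lk l))) *: A l)))
  /\ (star_linear conj Lmap ->
      forall k l : 'I_m,
        onesform conj (hadamard (B k) (mconj conj (Lk l)))
        = onesform conj (hadamard (mconj conj (B l)) (Lk k))).
Proof.
move=> A B.
have starE := star_linear_blk_symmetric conj hL.
have kronE : L = \sum_(k < m) tensmx (mconj conj (Lk k)) (A k)
    <-> blk_symmetric conj L := kron_expansion_blk_symmetric conj halpha.
have iiiE : (forall k, Lk k =
      \sum_(l < m) onesform conj (hadamard (B k) (mconj conj (Lk l))) *: A l)
    <-> (forall k, Lk k = \sum_(l < m) gram conj Lk beta k l *: Amx conj alpha l).
  by split=> expand k; rewrite expand; apply: eq_bigr => l _;
    rewrite onesform_gram.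
split; first split.
- exact: iff_trans starE (iff_sym kronE).
- apply: iff_trans kronE (iff_trans _ (iff_sym iiiE)).
  split; first exact: blk_symmetric_expansion halpha hbeta.
  exact: expansion_blk_symmetric hL hm conjK.
move=> /starE /(blk_symmetric_expansion halpha hbeta).
move=> /(expansion_gram_hermitian halpha hbeta hL hm conjK) herm k l.
by rewrite onesform_gram onesform_conj_gram // herm.
Qed.
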